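(* For every $n\ge 12$, there is an assignment $x:V\to\{-1,1\}$ with $x_{-\mathbf v}=-x_{\mathbf v}$ for all $\mathbf v\in V$ that satisfies clauses of $\Phi_n$ of total weight at least $\frac{3(\sqrt{21}-4)}{2}$.
   Context: Let $\mathbf e_1,\dots,\mathbf e_n$ be the standard basis of $\mathbb R^n$ and $V=\{\frac{1}{\sqrt3}(b_1\mathbf e_i+b_2\mathbf e_j+b_3\mathbf e_k): b_1,b_2,b_3\in\{-1,1\},\ 1\le i<j<k\le n\}$. To each $\mathbf v\in V$ associate a Boolean variable $x_{\mathbf v}\in\{-1,1\}$, with $x_{-\mathbf v}=-x_{\mathbf v}$. $\mathrm{NAE}(y_1,\dots,y_k)$ is satisfied iff not all $y_i$ are equal. $\mathcal C_3$ is the set of clauses $\mathrm{NAE}(x_{\mathbf v_1},x_{\mathbf v_2},x_{\mathbf v_3})$ with $\mathbf v_1=\frac{1}{\sqrt3}(s_1\mathbf e_{i_1}-s_2\mathbf e_{i_2}+s_4\mathbf e_{i_4})$, $\mathbf v_2=\frac{1}{\sqrt3}(s_2\mathbf e_{i_2}-s_3\mathbf e_{i_3}+s_5\mathbf e_{i_5})$, $\mathbf v_3=\frac{1}{\sqrt3}(s_3\mathbf e_{i_3}-s_1\mathbf e_{i_1}+s_6\mathbf e_{i_6})$ for distinct indices $i_1,\dots,i_6\in[n]$ and signs $s_1,\dots,s_6\in\{-1,1\}$. $\mathcal C_5$ is the set of clauses $\mathrm{NAE}(x_{\mathbf v_1},\dots,x_{\mathbf v_5})$ with $\mathbf v_j=\frac{1}{\sqrt3}(s_1\mathbf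 e_{i_1}+s_{2j}\mathbf e_{i_{2j}}+s_{2j+1}\mathbf e_{i_{2j+1}})$ for $j\in\{1,2,3,4\}$ and $\mathbf v_5=\frac{1}{\sqrt3}(s_{10}\mathbf e_{i_{10}}+s_{11}\mathbf e_{i_{11}}+s_{12}\mathbf e_{i_{12}})$ for distinct $i_1,\dots,i_{12}\in[n]$ and signs $s_1,\dots,s_{12}\in\{-1,1\}$. $\Phi_n$ is the instance with clause set $\mathcal C_3\cup\mathcal C_5$, each clause of $\mathcal C_3$ having weight $\frac{1-3/\sqrt{21}}{|\mathcal C_3|}$ and each clause of $\mathcal C_5$ having weight $\frac{3}{\sqrt{21}\,|\mathcal C_5|}$. *)

From HB Require Import structures.
From mathcomp Require Import all_boot all_order all_algebra.
Set Implicit Arguments. Unset Strict Implicit. Unset Printing Implicit Defensive.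
Import Order.TTheory GRing.Theory Num.Theory.
Local Open Scope ring_scope.

Section Defs.
Variable R : rcfType.
Variable n : nat.

Definition evec (i : 'I_n) : 'rV[R]_n := delta_mx 0 i.

Definition sgb (b : bool) : R := if b then 1 else -1.

Definition tvec (s1 : bool) (i : 'I_n) (s2 : bool) (j : 'I_n)
  (s3 : bool) (k : 'I_n) : 'rV[R]_n :=
  (Num.sqrt 3)^-1 *: (sgb s1 *: evec i + sgb s2 *: evec j + sgb s3 *: evec k).

Definition inV (v : 'rV[R]_n) : Prop :=
  exists (i j k : 'I_n) (b1 b2 b3 : bool),
    (i < j)%N /\ (j < k)%N /\ v = tvec b1 i b2 j b3 k.

(* parameters: index maps (required injective = distinct) and sign maps *)
Definition clause3 (ix : {ffun 'I_6 -> 'I_n}) (sg : {ffun 'I_6 -> bool})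
  : seq 'rV[R]_n :=
  let i k := ix (inord k.-1) in let s k := sg (inord k.-1) in
  [:: tvec (s 1%N) (i 1%N) (~~ s 2%N) (i 2%N) (s 4%N) (i 4%N);
      tvec (s 2%N) (i 2%N) (~~ s 3%N) (i 3%N) (s 5%N) (i 5%N);
      tvec (s 3%N) (i 3%N) (~~ s 1%N) (i 1%N) (s 6%N) (i 6%N)].
(* note: sgb (~~ b) = - sgb b, encoding the minus signs *)

Definition clause5 (ix : {ffun 'I_12 -> 'I_n}) (sg : {ffun 'I_12 -> bool})
  : seq 'rV[R]_n :=
  let i k := ix (inord k.-1) in let s k := sg (inord k.-1) in
  [seq tvec (s 1%N) (i 1%N) (s (2 * j)%N) (i (2 * j)%N)
            (s (2 * j).+1) (i (2 * j).+1) | j <- [:: 1; 2; 3; 4]%N]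
  ++ [:: tvec (s 10%N) (i 10%N) (s 11%N) (i 11%N) (s 12%N) (i 12%N)].

(* the clause sets C_3 and C_5 (clauses = argument lists, duplicates removed) *)
Definition C3 : seq (seq 'rV[R]_n) :=
  undup [seq clause3 p.1 p.2 | p <- enum [pred p : {ffun 'I_6 -> 'I_n} *
                                  {ffun 'I_6 -> bool} | injectiveb p.1]].

Definition C5 : seq (seq 'rV[R]_n) :=
  undup [seq clause5 p.1 p.2 | p <- enum [pred p : {ffun 'I_12 -> 'I_n} *
                                  {ffun 'I_12 -> bool} | injectiveb p.1]].

Definition NAE (x : 'rV[R]_n -> int) (c : seq 'rV[R]_n) : bool :=
  ~~ constant [seq x v | v <- c].

Definition w3 : R := (1 - 3 / Num.sqrt 21) / (size C3)%:R.
Definition w5 : R := 3 / (Num.sqrt 21 * (size C5)%:R).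

Definition satWeight (x : 'rV[R]_n -> int) : R :=
  \sum_(c <- C3 | NAE x c) w3 + \sum_(c <- C5 | NAE x c) w5.

End Defs.

(** Randomized rounding.  Every coordinate m independently receives a label
    (a_m, e_m): a_m is true ("marked") with probability al and e_m is a fair bit.
    A vector v = (s_i e_i + s_j e_j + s_k e_k) / sqrt 3 is rounded to the sign of
    sum_m (-1)^(e_m + f_m) v_m, where f_m flips all three coordinates of the support
    when all of them are marked and the unmarked ones when exactly two are; this
    assignment is odd in v.  Flipping the fair bits by the literal signs preserves
    the distribution, so every clause of C_3 (resp. C_5) is satisfied with the same
    probability sat3_prob al (resp. sat5_prob al), computed by conditioning on the
    coordinates shared by its literals.  For a suitable al both probabilities equal
    3 (sqrt 21 - 4) / 2, hence so does the expected satisfied weight, and some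
    labelling does at least as well as the expectation. *)

From HB Require Import structures.
From mathcomp Require Import all_boot all_order all_algebra.
From mathcomp Require Import ring lra.
Set Implicit Arguments. Unset Strict Implicit. Unset Printing Implicit Defensive.
Import Order.TTheory GRing.Theory Num.Theory.
Local Open Scope ring_scope.

(** * Product distributions *)

Section ProductDistribution.
Variables (R : comPzRingType) (T : finType) (n : nat) (p : T -> R).
Hypothesis p_sum1 : \sum_t p t = 1.

Local Notation cfg := {ffun 'I_n -> T}.

Definition pmass (tau : cfg) : R := \prod_m p (tau m).

Definition expect (G : cfg -> R) : R := \sum_tau pmass tau * G tau.

Lemma eq_expect G H : G =1 H -> expect G = expect H.
Proof. by move=> eqGH; apply: eq_bigr => tau _; rewrite eqGH. Qed.

Lemma sum_pmass : \sum_tau pmass tau = 1.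
Proof.
rewrite /pmass -(bigA_distr_bigA (fun _ t => p t)) /=.
by rewrite (eq_bigr (fun _ => 1)) ?big1_eq // => m _.
Qed.

Lemma expect_cst a : expect (fun _ => a) = a.
Proof. by rewrite /expect -big_distrl /= sum_pmass mul1r. Qed.

Lemma expectD G H : expect (fun tau => G tau + H tau) = expect G + expect H.
Proof. by rewrite /expect -big_split; apply: eq_bigr => tau _; rewrite mulrDr. Qed.

Lemma expectN G : expect (fun tau => - G tau) = - expect G.
Proof. by rewrite /expect -sumrN; apply: eq_bigr => tau _; rewrite mulrN. Qed.

Lemma expectB G H : expect (fun tau => G tau - H tau) = expect G - expect H.
Proof. by rewrite expectD expectN. Qed.

Lemma expectZ a G : expect (fun tau => a * G tau) = a * expect G.
Proof. by rewrite /expect big_distrr; apply: eq_bigr => tau _; rewrite mulrCA. Qed.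

Lemma expect_sum (I : Type) (r : seq I) (F : I -> cfg -> R) :
  expect (fun tau => \sum_(i <- r) F i tau) = \sum_(i <- r) expect (F i).
Proof.
rewrite /expect exchange_big /=; apply: eq_bigr => tau _.
by rewrite big_distrr.
Qed.

Lemma expect_count (I : eqType) (r : seq I) (P : I -> cfg -> bool) (w q : R) :
  (forall i, i \in r -> expect (fun tau => (P i tau)%:R) = q) ->
  expect (fun tau => \sum_(i <- r | P i tau) w) = (size r)%:R * w * q.
Proof.
move=> Pq; transitivity (expect (fun tau => \sum_(i <- r) w * (P i tau)%:R)).
  apply: eq_expect => tau; rewrite big_mkcond; apply: eq_bigr => i _.
  by case: (P i tau); rewrite ?mulr1 ?mulr0.
rewrite expect_sum big_seq (eq_bigr (fun=> w * q)) => [|i /Pq <-]; last exact: expectZ.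
by rewrite -big_seq big_const_seq count_predT iter_addr_0 -mulrA mulr_natl.
Qed.

Lemma expect_relabel (phi : 'I_n -> T -> T) G :
  (forall m, injective (phi m)) -> (forall m t, p (phi m t) = p t) ->
  expect G = expect (fun tau => G [ffun m => phi m (tau m)]).
Proof.
move=> phi_inj p_phi.
have inj : injective (fun tau : cfg => [ffun m => phi m (tau m)]).
  move=> tau tau' /ffunP eq_phi; apply/ffunP => m; apply: (phi_inj m).
  by have := eq_phi m; rewrite !ffunE.
rewrite /expect (reindex_inj inj); apply: eq_bigr => tau _.
by congr (_ * _); apply: eq_bigr => m _; rewrite ffunE p_phi.
Qed.

Definition fupd (tau : cfg) (c : 'I_n) (t : T) : cfg :=
  [ffun m => if m == c then t else tau m].

Definition free_of (c : 'I_n) (G : cfg -> R) := forall tau t, G (fupd tau c t) = G tau.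

Lemma fupd_eq tau c t : fupd tau c t c = t.
Proof. by rewrite ffunE eqxx. Qed.

Lemma fupd_neq tau c t m : m != c -> fupd tau c t m = tau m.
Proof. by rewrite ffunE => /negbTE ->. Qed.

Lemma fupd_fupd tau c t u : fupd (fupd tau c t) c u = fupd tau c u.
Proof. by apply/ffunP => m; rewrite !ffunE; case: eqP. Qed.

Lemma fupd_id tau c : fupd tau c (tau c) = tau.
Proof. by apply/ffunP => m; rewrite ffunE; case: eqP => [->|]. Qed.

Lemma sum_slice c t u (H : cfg -> R) :
  \sum_(tau : cfg | tau c == u) H tau = \sum_(tau : cfg | tau c == t) H (fupd tau c u).
Proof.
rewrite (reindex_onto (fun tau => fupd tau c u) (fun tau => fupd tau c t)) /=.
  apply: eq_bigl => tau; rewrite fupd_eq eqxx fupd_fupd.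
  by apply/eqP/eqP => [<-|<-]; rewrite ?fupd_eq ?fupd_id.
by move=> tau /eqP <-; rewrite fupd_fupd fupd_id.
Qed.

Lemma pmass_fupd tau c t : pmass (fupd tau c t) = p t * \prod_(m | m != c) p (tau m).
Proof.
rewrite /pmass (bigD1 c) //= fupd_eq; congr (_ * _).
by apply: eq_bigr => m; move/fupd_neq ->.
Qed.

Lemma sum_slice_pmass c t u G : free_of c G ->
  \sum_(tau : cfg | tau c == u) pmass tau * G tau =
  p u * \sum_(tau : cfg | tau c == t) \prod_(m | m != c) p (tau m) * G tau.
Proof.
move=> Gfree; rewrite (sum_slice c t) big_distrr; apply: eq_bigr => tau _.
by rewrite pmass_fupd Gfree -mulrA.
Qed.

Lemma expect_cond c (F : T -> cfg -> R) : (forall t, free_of c (F t)) ->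
  expect (fun tau => F (tau c) tau) = \sum_t p t * expect (F t).
Proof.
move=> Ffree; rewrite /expect (partition_big (fun tau : cfg => tau c) xpredT) //=.
apply: eq_bigr => t _; have slice u := sum_slice_pmass t u (Ffree t).
rewrite [in RHS](partition_big (fun tau : cfg => tau c) xpredT) //=.
rewrite (eq_bigr _ (fun u _ => slice u)) -big_distrl /= p_sum1 mul1r -slice.
by apply: eq_bigr => tau /eqP ->.
Qed.

Lemma expect_fupd c G : expect G = \sum_t p t * expect (fun tau => G (fupd tau c t)).
Proof.
rewrite -(@expect_cond c (fun t tau => G (fupd tau c t))) => [|t tau u].
  by apply: eq_expect => tau; rewrite fupd_id.
by rewrite fupd_fupd.
Qed.

Lemma expect_coord c f : expect (fun tau => f (tau c)) = \sum_t p t * f t.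
Proof.
rewrite (expect_fupd c); apply: eq_bigr => t _.
by under eq_expect => tau do rewrite fupd_eq; rewrite expect_cst.
Qed.

Lemma expect_mul_coord c f G : free_of c G ->
  expect (fun tau => f (tau c) * G tau) = (\sum_t p t * f t) * expect G.
Proof.
move=> Gfree; rewrite (expect_fupd c) big_distrl; apply: eq_bigr => t _ /=.
by under eq_expect => tau do rewrite fupd_eq Gfree; rewrite expectZ mulrA.
Qed.

Lemma expect_pair a b (f : T -> T -> R) : b != a ->
  expect (fun tau => f (tau a) (tau b)) = \sum_t p t * \sum_u p u * f t u.
Proof.
move=> ba; rewrite (expect_fupd a); apply: eq_bigr => t _.
by under eq_expect => tau do rewrite fupd_eq fupd_neq //; rewrite expect_coord.
Qed.

Lemma expect_mul_pair a b (f : T -> T -> R) G : b != a -> free_of a G -> free_of b G ->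
  expect (fun tau => f (tau a) (tau b) * G tau) =
  (\sum_t p t * \sum_u p u * f t u) * expect G.
Proof.
move=> ba Gfree_a Gfree_b; rewrite (expect_fupd a) big_distrl; apply: eq_bigr => t _ /=.
under eq_expect => tau do rewrite fupd_eq fupd_neq // Gfree_a.
by rewrite expect_mul_coord // mulrA.
Qed.

End ProductDistribution.

Section Averaging.
Variables (R : realDomainType) (T : finType) (n : nat) (p : T -> R).
Hypotheses (p_sum1 : \sum_t p t = 1) (p_ge0 : forall t, 0 <= p t).

Lemma expect_le_max (G : {ffun 'I_n -> T} -> R) : exists tau, expect p G <= G tau.
Proof.
have [tau0 _] : exists tau : {ffun 'I_n -> T}, true.
  case: (pickP (@predT {ffun 'I_n -> T})) => [tau0 _ | none]; first by exists tau0.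
  by move: (sum_pmass n p_sum1); rewrite big_pred0 // => /eqP; rewrite eq_sym oner_eq0.
case: (arg_maxP G (isT : predT tau0)) => tau _ G_max; exists tau.
rewrite -(expect_cst n p_sum1 (G tau)) ler_sum // => tau' _.
by apply: ler_wpM2l; [apply: prodr_ge0 => m _; exact: p_ge0 | exact: G_max].
Qed.

End Averaging.

Section Patterns.
Variables (R : comPzRingType) (T : finType) (n : nat) (p : T -> R).
Hypothesis p_sum1 : \sum_t p t = 1.

Local Notation expect := (expect p).

Definition avg_last (f : T -> T -> T -> R) (t u : T) : R := \sum_w p w * f t u w.

Definition cycle3_sum (f : T -> T -> T -> R) : R :=
  \sum_t0 p t0 * \sum_t1 p t1 * \sum_t2 p t2 *
    (avg_last f t0 t1 * (avg_last f t1 t2 * avg_last f t2 t0)).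

Lemma expect_cycle3 (c : nat -> 'I_n) (f : T -> T -> T -> R) :
  {in gtn 6 &, injective c} ->
  expect (fun tau => f (tau (c 0)) (tau (c 1)) (tau (c 3)) *
     (f (tau (c 1)) (tau (c 2)) (tau (c 4)) * f (tau (c 2)) (tau (c 0)) (tau (c 5)))) =
  cycle3_sum f.
Proof.
move=> /inj_in_eq c_eq.
rewrite (expect_fupd p_sum1 (c 0)); apply: eq_bigr => t0 _; congr (_ * _).
rewrite (expect_fupd p_sum1 (c 1)); apply: eq_bigr => t1 _; congr (_ * _).
rewrite (expect_fupd p_sum1 (c 2)); apply: eq_bigr => t2 _; congr (_ * _).
under eq_expect => tau do rewrite !ffunE !c_eq //=.
rewrite (expect_mul_coord p_sum1 (c := c 3)) => [|tau t]; last by rewrite !ffunE !c_eq.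
rewrite (expect_mul_coord p_sum1 (c := c 4)) => [|tau t]; last by rewrite !ffunE !c_eq.
by rewrite (expect_coord p_sum1).
Qed.

Definition avg_last2 (f : T -> T -> T -> R) (t : T) : R := \sum_u p u * avg_last f t u.

Definition star5_sum (f : T -> T -> T -> R) : R :=
  (\sum_t p t * avg_last2 f t ^+ 4) * (\sum_t p t * avg_last2 f t).

Lemma expect_star5 (c : nat -> 'I_n) (f : T -> T -> T -> R) :
  {in gtn 12 &, injective c} ->
  expect (fun tau => f (tau (c 0)) (tau (c 1)) (tau (c 2)) *
     (f (tau (c 0)) (tau (c 3)) (tau (c 4)) *
     (f (tau (c 0)) (tau (c 5)) (tau (c 6)) *
     (f (tau (c 0)) (tau (c 7)) (tau (c 8)) *
      f (tau (c 9)) (tau (c 10)) (tau (c 11)))))) =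
  star5_sum f.
Proof.
move=> /inj_in_eq c_eq.
rewrite (expect_fupd p_sum1 (c 0)) /star5_sum big_distrl; apply: eq_bigr => t0 _ /=.
under eq_expect => tau do rewrite !ffunE !c_eq //=.
rewrite -mulrA; congr (_ * _).
have pair a b := expect_mul_pair p_sum1 (a := c a) (b := c b).
do 4!(rewrite pair ?c_eq // => [|tau t|tau t]; rewrite ?ffunE ?c_eq //).
have -> : expect (fun tau => f (tau (c 9)) (tau (c 10)) (tau (c 11))) =
          \sum_t p t * avg_last2 f t.
  rewrite (expect_fupd p_sum1 (c 9)); apply: eq_bigr => t _; congr (_ * _).
  under eq_expect => tau do rewrite !ffunE !c_eq //=.
  by rewrite (expect_pair p_sum1) ?c_eq.
by rewrite !mulrA -expr2 -!exprSr.
Qed.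

End Patterns.

(** * The rounding *)

Definition sgnz (b : bool) : int := if b then 1 else -1.

Lemma sgnzN b : sgnz (~~ b) = - sgnz b.
Proof. by case: b. Qed.

Notation label := (bool * bool)%type.

Definition shift (s : bool) (t : label) : label := (t.1, s (+) t.2).

Lemma shiftK s : involutive (shift s).
Proof. by case=> a e; rewrite /shift addKb. Qed.

Lemma shiftN s t : shift (~~ s) t = shift true (shift s t).
Proof. by case: s; case: t => a [] . Qed.

Definition maj3 (b1 b2 b3 : bool) := [|| b1 && b2, b2 && b3 | b3 && b1].

Definition vote (t1 t2 t3 : label) : bool :=
  let k := (t1.1 + t2.1 + t3.1)%N in
  let sign (t : label) := t.2 (+) (((k == 2) && ~~ t.1) || (k == 3)) in
  maj3 (sign t1) (sign t2) (sign t3).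

Lemma vote_shiftT t1 t2 t3 :
  vote (shift true t1) (shift true t2) (shift true t3) = ~~ vote t1 t2 t3.
Proof. by case: t1 t2 t3 => [[] []] [[] []] [[] []]. Qed.

Lemma sum_mul_indicator (R : pzSemiRingType) (I : finType) (F : I -> R) i :
  \sum_j F j * (j == i)%:R = F i.
Proof. by rewrite (bigD1 i) //= eqxx mulr1 big1 ?addr0 // => j /negbTE ->; rewrite mulr0. Qed.

Section Rounding.
Variables (R : rcfType) (n : nat).

Local Notation cfg := {ffun 'I_n -> label}.

Definition marked (tau : cfg) (v : 'rV[R]_n) : nat :=
  #|[pred m | (tau m).1 && (v ord0 m != 0)]|.

Definition flipped (tau : cfg) (v : 'rV[R]_n) (m : 'I_n) : bool :=
  let k := marked tau v in ((k == 2) && ~~ (tau m).1) || (k == 3).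

Definition round (tau : cfg) (v : 'rV[R]_n) : int :=
  sgnz (0 < \sum_m (-1) ^+ ((tau m).2 (+) flipped tau v m) * v ord0 m).

Lemma sgb_int b : sgb R b = (sgnz b)%:~R.
Proof. by case: b; rewrite /= ?rmorphN. Qed.

Lemma sgb_sum3_gt0 b1 b2 b3 : (0 < sgb R b1 + sgb R b2 + sgb R b3) = maj3 b1 b2 b3.
Proof. by rewrite !sgb_int -!rmorphD ltr0z; case: b1; case: b2; case: b3. Qed.

Lemma signM_sgb (e s : bool) : (-1) ^+ e * sgb R s = sgb R (s (+) e).
Proof. by case: e; case: s; rewrite /sgb /= ?expr1 ?expr0 ?mulN1r ?mul1r ?opprK. Qed.

Lemma tvec_coord s1 (i : 'I_n) s2 (j : 'I_n) s3 (k m : 'I_n) :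
  tvec R s1 i s2 j s3 k ord0 m =
  (Num.sqrt 3)^-1 *
    (sgb R s1 * (m == i)%:R + sgb R s2 * (m == j)%:R + sgb R s3 * (m == k)%:R).
Proof. by rewrite /tvec /evec !mxE. Qed.

Lemma sgb_neq0 b : sgb R b != 0.
Proof. by case: b; rewrite /sgb ?oppr_eq0 oner_eq0. Qed.

Lemma tvec_coord_neq0 s1 (i : 'I_n) s2 (j : 'I_n) s3 (k m : 'I_n) :
  i != j -> i != k -> j != k ->
  (tvec R s1 i s2 j s3 k ord0 m != 0) = [|| m == i, m == j | m == k].
Proof.
move=> ij ik jk; rewrite tvec_coord mulf_eq0 invr_eq0 sqrtr_eq0 lern0 /=.
have [->|mi] := eqVneq m i.
  by rewrite (negbTE ij) (negbTE ik) !mulr0 !addr0 mulr1 sgb_neq0.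
have [->|mj] := eqVneq m j.
  by rewrite (negbTE jk) !mulr0 mulr1 add0r addr0 sgb_neq0.
have [_|mk] := eqVneq m k.
  by rewrite !mulr0 mulr1 !add0r sgb_neq0.
by rewrite !mulr0 !addr0 eqxx.
Qed.

Lemma marked_tvec tau s1 (i : 'I_n) s2 (j : 'I_n) s3 (k : 'I_n) :
  i != j -> i != k -> j != k ->
  marked tau (tvec R s1 i s2 j s3 k) = ((tau i).1 + (tau j).1 + (tau k).1)%N.
Proof.
move=> ij ik jk; have uniq_ijk : uniq [:: i; j; k] by rewrite /= !inE negb_or ij ik jk.
transitivity #|[seq m <- [:: i; j; k] | (tau m).1]|.
  by apply: eq_card => m; rewrite inE mem_filter !inE tvec_coord_neq0.
by rewrite (card_uniqP (filter_uniq (fun m => (tau m).1) uniq_ijk)) size_filter /= addn0 addnA.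
Qed.

Lemma round_tvec tau s1 (i : 'I_n) s2 (j : 'I_n) s3 (k : 'I_n) :
  i != j -> i != k -> j != k ->
  round tau (tvec R s1 i s2 j s3 k) =
  sgnz (vote (shift s1 (tau i)) (shift s2 (tau j)) (shift s3 (tau k))).
Proof.
move=> ij ik jk; rewrite /round /flipped marked_tvec //.
under eq_bigr => m _ do rewrite tvec_coord mulrCA.
rewrite -big_distrr /=.
under eq_bigr => m _ do rewrite !mulrDr !mulrA.
rewrite !big_split /= !sum_mul_indicator !signM_sgb.
rewrite pmulr_rgt0 ?invr_gt0 ?sqrtr_gt0 ?ltr0n // sgb_sum3_gt0.
by rewrite /vote /shift /= !addbA.
Qed.

Lemma sgbN b : sgb R (~~ b) = - sgb R b.
Proof. by case: b; rewrite /= ?opprK. Qed.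

Lemma tvecN s1 (i : 'I_n) s2 (j : 'I_n) s3 (k : 'I_n) :
  - tvec R s1 i s2 j s3 k = tvec R (~~ s1) i (~~ s2) j (~~ s3) k.
Proof. by apply/rowP => m; rewrite mxE !tvec_coord !sgbN; ring. Qed.

Lemma inV_tvec (v : 'rV[R]_n) : inV v -> exists (i j k : 'I_n) s1 s2 s3,
  [/\ i != j, i != k, j != k & v = tvec R s1 i s2 j s3 k].
Proof.
case=> i [j [k [s1 [s2 [s3 [ij [jk ->]]]]]]]; exists i, j, k, s1, s2, s3.
by rewrite -!val_eqE /= !ltn_eqF // (ltn_trans ij).
Qed.

Lemma round_pm1 tau v : round tau v = 1 \/ round tau v = -1.
Proof. by rewrite /round; case: (0 < _); [left | right]. Qed.

Lemma round_opp tau v : inV v -> round tau (- v) = - round tau v.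
Proof.
move=> /inV_tvec [i [j [k [s1 [s2 [s3 [ij ik jk ->]]]]]]].
by rewrite tvecN !round_tvec // !shiftN vote_shiftT sgnzN.
Qed.

End Rounding.

(** * Clause probabilities *)

Lemma prod_indicator_all (R : pzSemiRingType) (T : Type) (P : pred T) (s : seq T) :
  \prod_(x <- s) (P x)%:R = (all P s)%:R :> R.
Proof.
elim: s => [|x s IH]; first by rewrite big_nil.
by rewrite big_cons IH /=; case: (P x); rewrite ?mul1r ?mul0r.
Qed.

Lemma nae_sgnz (R : pzRingType) (bs : seq bool) : bs != [::] ->
  (~~ constant [seq sgnz b | b <- bs])%:R =
  1 - \prod_(b <- bs) b%:R - \prod_(b <- bs) (~~ b)%:R :> R.
Proof.
case: bs => // b bs _; rewrite /= all_map !big_cons !prod_indicator_all.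
have -> : all (fun x => sgnz x == sgnz b) bs = if b then all id bs else all negb bs.
  by case: b; apply: eq_all; case.
case: b; first by case: (all id bs); rewrite /= ?mul1r ?mul0r ?subr0 ?subrr.
by case: (all negb bs); rewrite /= ?mul1r ?mul0r ?subr0 ?subrr.
Qed.

Lemma sum_label (R : nmodType) (f : label -> R) :
  \sum_t f t = f (true, true) + f (true, false) + (f (false, true) + f (false, false)).
Proof.
rewrite (eq_bigr (fun t => f (t.1, t.2))) => [|[] //].
by rewrite -(pair_bigA _ (fun a e => f (a, e))) /= !big_bool.
Qed.

Section LabelDistribution.
Variables (R : realFieldType) (al : R).

Definition label_prob (t : label) : R := if t.1 then al / 2 else (1 - al) / 2.

Lemma label_prob_sum1 : \sum_t label_prob t = 1.
Proof. by rewrite sum_label /label_prob /=; field. Qed.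

Lemma label_prob_ge0 : 0 <= al <= 1 -> forall t, 0 <= label_prob t.
Proof. by move=> /andP [al_ge0 al_le1] [[] ?]; rewrite /label_prob /=; lra. Qed.

Definition sat3_prob : R := 15/16 - 3/4 * al ^+ 2 + 3/4 * al ^+ 4.

Definition sat5_prob : R := 1 - ((3/4 - al ^+ 2 / 2) ^+ 4 + (1/4 + al ^+ 2 / 2) ^+ 4) / 2.

Lemma cycle3_sum_vote :
  1 - cycle3_sum label_prob (fun x y z => (vote x (shift true y) z)%:R)
    - cycle3_sum label_prob (fun x y z => (~~ vote x (shift true y) z)%:R) = sat3_prob.
Proof.
rewrite /cycle3_sum !(sum_label (R := R)) /avg_last !(sum_label (R := R)).
by rewrite /label_prob /sat3_prob /=; field.
Qed.

Lemma star5_sum_vote :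
  1 - star5_sum label_prob (fun x y z => (vote x y z)%:R)
    - star5_sum label_prob (fun x y z => (~~ vote x y z)%:R) = sat5_prob.
Proof.
have avg2 (b : bool) t : avg_last2 label_prob (fun x y z => (b (+) vote x y z)%:R) t =
    if b (+) t.2 then 3/4 - al ^+ 2 / 2 else 1/4 + al ^+ 2 / 2.
  case: b; case: t => [[] []];
    by rewrite /avg_last2 /avg_last !(sum_label (R := R)) /label_prob /=; field.
rewrite /star5_sum !(sum_label (R := R)) !(avg2 false) !(avg2 true).
by rewrite /label_prob /sat5_prob /=; field.
Qed.

End LabelDistribution.

Section ClauseProbabilities.
Variables (R : rcfType) (n : nat) (al : R).

Local Notation expect := (expect (label_prob al)).

(* Flipping the fair bit of coordinate [ix j] by [sg j] preserves [label_prob]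
   and absorbs the literal signs of a clause indexed by [ix]. *)
Definition sign_at k (ix : {ffun 'I_k -> 'I_n}) (sg : {ffun 'I_k -> bool}) (m : 'I_n) :=
  [exists j, (ix j == m) && sg j].

Lemma sign_at_ix k (ix : {ffun 'I_k -> 'I_n}) sg j : injective ix -> sign_at ix sg (ix j) = sg j.
Proof.
move=> ix_inj; apply/existsP/idP => [[j' /andP [/eqP /ix_inj -> //]] | sg_j].
by exists j; rewrite eqxx.
Qed.

Lemma inj_in_comp_inord k (ix : 'I_k.+1 -> 'I_n) : injective ix ->
  {in gtn k.+1 &, injective (fun a => ix (inord a))}.
Proof. by move=> ix_inj a b a_lt b_lt /ix_inj /(congr1 val); rewrite /= !inordK. Qed.

Lemma round_clause3 (tau : {ffun 'I_n -> label}) (ix : {ffun 'I_6 -> 'I_n})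
    (sg : {ffun 'I_6 -> bool}) :
  injective ix ->
  let t a := tau (ix (inord a)) in let s a := sg (inord a) in
  [seq round tau v | v <- clause3 R ix sg] =
  [seq sgnz b | b <- [:: vote (shift (s 0) (t 0)) (shift (~~ s 1) (t 1)) (shift (s 3) (t 3));
                         vote (shift (s 1) (t 1)) (shift (~~ s 2) (t 2)) (shift (s 4) (t 4));
                         vote (shift (s 2) (t 2)) (shift (~~ s 0) (t 0)) (shift (s 5) (t 5))]].
Proof.
move=> /inj_in_comp_inord /inj_in_eq ix_eq t s.
by rewrite /= !round_tvec // ix_eq.
Qed.

Lemma expect_nae_clause3 (ix : {ffun 'I_6 -> 'I_n}) sg : injective ix ->
  expect (fun tau => (NAE (round tau) (clause3 R ix sg))%:R) = sat3_prob al.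
Proof.
move=> ix_inj; have c_inj := inj_in_comp_inord ix_inj.
rewrite (expect_relabel (phi := fun m => shift (sign_at ix sg m))) => [|m|//]; last first.
  exact: inv_inj (shiftK _).
under eq_expect => tau do rewrite /NAE round_clause3 // !ffunE !sign_at_ix // !shiftN !shiftK
  nae_sgnz //= !big_cons !big_nil !mulr1.
rewrite !expectB (expect_cst _ (label_prob_sum1 al)).
rewrite (expect_cycle3 (label_prob_sum1 al) (fun x y z => (vote x (shift true y) z)%:R) c_inj).
rewrite (expect_cycle3 (label_prob_sum1 al) (fun x y z => (~~ vote x (shift true y) z)%:R) c_inj).
exact: cycle3_sum_vote.
Qed.

Lemma round_clause5 (tau : {ffun 'I_n -> label}) (ix : {ffun 'I_12 -> 'I_n})
    (sg : {ffun 'I_12 -> bool}) :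
  injective ix ->
  let t a := shift (sg (inord a)) (tau (ix (inord a))) in
  [seq round tau v | v <- clause5 R ix sg] =
  [seq sgnz b | b <- [:: vote (t 0) (t 1) (t 2); vote (t 0) (t 3) (t 4); vote (t 0) (t 5) (t 6);
                         vote (t 0) (t 7) (t 8); vote (t 9) (t 10) (t 11)]].
Proof.
move=> /inj_in_comp_inord /inj_in_eq ix_eq t.
by rewrite /= !round_tvec // ix_eq.
Qed.

Lemma expect_nae_clause5 (ix : {ffun 'I_12 -> 'I_n}) sg : injective ix ->
  expect (fun tau => (NAE (round tau) (clause5 R ix sg))%:R) = sat5_prob al.
Proof.
move=> ix_inj; have c_inj := inj_in_comp_inord ix_inj.
rewrite (expect_relabel (phi := fun m => shift (sign_at ix sg m))) => [|m|//]; last first.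
  exact: inv_inj (shiftK _).
under eq_expect => tau do rewrite /NAE round_clause5 // !ffunE !sign_at_ix // !shiftK
  nae_sgnz //= !big_cons !big_nil !mulr1.
rewrite !expectB (expect_cst _ (label_prob_sum1 al)).
rewrite (expect_star5 (label_prob_sum1 al) (fun x y z => (vote x y z)%:R) c_inj).
rewrite (expect_star5 (label_prob_sum1 al) (fun x y z => (~~ vote x y z)%:R) c_inj).
exact: star5_sum_vote.
Qed.

End ClauseProbabilities.

(** * The satisfied weight *)

Section SatisfiedWeight.
Variables (R : rcfType) (n : nat).

Lemma mem_C3 c : c \in C3 R n ->
  exists2 ix : {ffun 'I_6 -> 'I_n}, injective ix & exists sg, c = clause3 R ix sg.
Proof.
rewrite mem_undup => /mapP [[ix sg]]; rewrite mem_enum /= => /injectiveP ix_inj ->.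
by exists ix => //; exists sg.
Qed.

Lemma mem_C5 c : c \in C5 R n ->
  exists2 ix : {ffun 'I_12 -> 'I_n}, injective ix & exists sg, c = clause5 R ix sg.
Proof.
rewrite mem_undup => /mapP [[ix sg]]; rewrite mem_enum /= => /injectiveP ix_inj ->.
by exists ix => //; exists sg.
Qed.

Lemma expect_satWeight al :
  expect (label_prob al) (fun tau => satWeight (@round R n tau)) =
  (size (C3 R n))%:R * w3 R n * sat3_prob al + (size (C5 R n))%:R * w5 R n * sat5_prob al.
Proof.
have nae3 c : c \in C3 R n ->
    expect (label_prob al) (fun tau => (NAE (round tau) c)%:R) = sat3_prob al.
  by case/mem_C3 => ix ix_inj [sg ->]; apply: expect_nae_clause3.
have nae5 c : c \in C5 R n ->
    expect (label_prob al) (fun tau => (NAE (round tau) c)%:R) = sat5_prob al.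
  by case/mem_C5 => ix ix_inj [sg ->]; apply: expect_nae_clause5.
by rewrite expectD (expect_count _ nae3) (expect_count _ nae5).
Qed.

Lemma injective_widen_ffun k (le_kn : (k <= n)%N) :
  injective [ffun j : 'I_k => widen_ord le_kn j].
Proof. by move=> a b; rewrite !ffunE => /(congr1 val) /= /val_inj. Qed.

Lemma size_C3_gt0 : (6 <= n)%N -> (0 < size (C3 R n))%N.
Proof.
move=> le6n; set ix := [ffun j => widen_ord le6n j].
suff : clause3 R ix [ffun=> true] \in C3 R n by case: (C3 R n).
rewrite mem_undup; apply/mapP; exists (ix, [ffun=> true]) => //.
by rewrite mem_enum; apply/injectiveP/injective_widen_ffun.
Qed.

Lemma size_C5_gt0 : (12 <= n)%N -> (0 < size (C5 R n))%N.
Proof.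
move=> le12n; set ix := [ffun j => widen_ord le12n j].
suff : clause5 R ix [ffun=> true] \in C5 R n by case: (C5 R n).
rewrite mem_undup; apply/mapP; exists (ix, [ffun=> true]) => //.
by rewrite mem_enum; apply/injectiveP/injective_widen_ffun.
Qed.

Lemma total_weight : (12 <= n)%N ->
  (size (C3 R n))%:R * w3 R n + (size (C5 R n))%:R * w5 R n = 1.
Proof.
move=> le12n; have /size_C3_gt0 : (6 <= n)%N by apply: leq_trans le12n.
move: (size_C5_gt0 le12n); rewrite -!(ltr0n R) => /lt0r_neq0 C5_neq0 /lt0r_neq0 C3_neq0.
have s_neq0 : Num.sqrt 21 != 0 :> R by rewrite sqrtr_eq0 -ltNge ltr0n.
by rewrite /w3 /w5; field; rewrite s_neq0 C3_neq0 C5_neq0.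
Qed.

End SatisfiedWeight.

(* With u := 1/4 - al^2/2, sat3_prob al = 3/4 + 3 u^2 and
   sat5_prob al = 15/16 - 3/2 u^2 - u^4; both equal 3 (sqrt 21 - 4) / 2
   when u^2 = sqrt 21 / 2 - 9/4. *)
Lemma balanced_bias (R : rcfType) : exists2 al : R, 0 <= al <= 1 &
  sat3_prob al = 3 * (Num.sqrt 21 - 4) / 2 /\ sat5_prob al = 3 * (Num.sqrt 21 - 4) / 2.
Proof.
set s := Num.sqrt (21 : R).
have s2 : s ^+ 2 = 21 by rewrite sqr_sqrtr // ler0n.
have s_gt0 : 0 < s by rewrite sqrtr_gt0 ltr0n.
have z_ge0 : 0 <= s / 2 - 9 / 4 by nra.
set u := Num.sqrt (s / 2 - 9 / 4).
have u2 : u ^+ 2 = s / 2 - 9 / 4 by rewrite sqr_sqrtr.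
have u_ge0 : 0 <= u by rewrite sqrtr_ge0.
have u_lt : u < 1 / 4.
  have : u ^+ 2 < 1 / 16 by rewrite u2; nra.
  nra.
set al := Num.sqrt (1 / 2 - 2 * u).
have al2 : al ^+ 2 = 1 / 2 - 2 * u by rewrite sqr_sqrtr //; lra.
have al4 : al ^+ 4 = (1 / 2 - 2 * u) ^+ 2 by rewrite (exprM _ 2 2) al2.
exists al; last by rewrite /sat3_prob /sat5_prob al2 al4; split; nra.
apply/andP; split; first exact: sqrtr_ge0.
by rewrite -(ler_pXn2r (isT : 0 < 2)%N) ?nnegrE ?sqrtr_ge0 // expr1n al2; lra.
Qed.

Theorem mainTheorem9 (R : rcfType) (n : nat) (hn : (12 <= n)%N) :
  exists x : 'rV[R]_n -> int,
    (forall v, inV v -> x v = 1 \/ x v = -1) /\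
    (forall v, inV v -> x (- v) = - x v) /\
    satWeight x >= 3 * (Num.sqrt 21 - 4) / 2.
Proof.
have [al al01 [sat3_val sat5_val]] := balanced_bias R.
have [tau exp_le] := expect_le_max (label_prob_sum1 al) (label_prob_ge0 al01)
  (fun tau => satWeight (@round R n tau)).
exists (round tau); split; [by move=> v _; apply: round_pm1 | split; first exact: round_opp].
rewrite (le_trans _ exp_le) // expect_satWeight sat3_val sat5_val -mulrDl total_weight //.
by rewrite mul1r.
Qed.
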